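(* Let $G$ be a connected graph with at least two vertices and let $\sigma=(v_1,\dots,v_n)$ be a layered search ordering of $G$. If the $\mathcal{F}$-tree of $\sigma$ has at most $k$ leaves, then the bandwidth of $\sigma$ is at most $2k-1$.
   Context: All graphs are finite, simple, undirected, connected and non-empty. A search ordering of $G$ is an ordering $(v_1,\dots,v_n)$ of $V(G)$ such that every $v_i$ with $i>1$ has a neighbor among $v_1,\dots,v_{i-1}$. A layered search ordering is a search ordering in which the distance $d_G(v_1,v_i)$ is non-decreasing in $i$ (the distance layers of the start vertex are traversed in increasing order). The $\mathcal{F}$-tree (first-in tree) of a search ordering $\sigma=(v_1,\dots,v_n)$ is the spanning tree rooted at $v_1$ in which the parent of each $v_i$, $i>1$, is the neighbor of $v_i$ that appears leftmost in $\sigma$. A leaf of a rooted tree is a non-root vertex without children (the root is never counted as a leaf, even if it has degree 1). The bandwidth of an ordering $\sigma=(v_1,\dots,v_n)$ is $\max_{v_iv_j\in E(G)}|i-j|$. *)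

From mathcomp Require Import all_boot.
Set Implicit Arguments. Unset Strict Implicit. Unset Printing Implicit Defensive.

Definition simple_graph (T : finType) (e : rel T) : Prop :=
  symmetric e /\ irreflexive e.

Definition connected_graph (T : finType) (e : rel T) : Prop :=
  forall x y : T, connect e x y.

Definition walk_len (T : finType) (e : rel T) (n : nat) (x y : T) : bool :=
  [exists p : n.-tuple T, path e x p && (last x p == y)].

(* graph distance: least n with a walk of length n (in a connected graph
   the distance is < #|T|). *)
Definition gdist (T : finType) (e : rel T) (x y : T) : nat :=
  find (fun n => walk_len e n x y) (iota 0 #|T|).

Definition is_ordering (T : finType) (s : seq T) : Prop :=
  uniq s /\ forall x : T, x \in s.

Definition search_ordering (T : finType) (e : rel T) (s : seq T) : Prop :=
  is_ordering s /\
  forall i, 0 < i < size s -> forall x0 : T,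
    has (e (nth x0 s i)) (take i s).

Definition layered_search_ordering (T : finType) (e : rel T) (s : seq T) : Prop :=
  search_ordering e s /\
  forall x0 : T, forall i j, i <= j < size s ->
    gdist e (nth x0 s 0) (nth x0 s i) <= gdist e (nth x0 s 0) (nth x0 s j).

Definition ftree_parent (T : finType) (e : rel T) (s : seq T) (v : T) : T :=
  nth v s (find (e v) s).

Definition ftree_leaves (T : finType) (e : rel T) (s : seq T) (r : T) : {set T} :=
  [set v | (v != r) &&
     [forall u, (u != r) ==> (ftree_parent e s u != v)]].

Definition bandwidth (T : finType) (e : rel T) (s : seq T) : nat :=
  \max_(u : T) \max_(v : T | e u v)
     maxn (index u s - index v s) (index v s - index u s).

From mathcomp Require Import all_boot zify.
Set Implicit Arguments. Unset Strict Implicit.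

(* In a layered search ordering the F-tree parent of a non-root vertex lies
   one layer closer to the root, so every vertex of a layer [d > 0] is the
   depth-[d] ancestor of some leaf: each layer has at most [k] vertices.
   The positions between the endpoints of an edge [uv] are all filled by
   vertices of the layers of [u] and [v], which are equal or consecutive,
   hence they span at most [2k] positions. *)

Definition layer (T : finType) (e : rel T) (r : T) (d : nat) : {set T} :=
  [set x | gdist e r x == d].

Section Distance.

Variables (T : finType) (e : rel T).

Lemma walk_lenP n x y :
  reflect (exists p : seq T, [/\ size p = n, path e x p & last x p = y])
          (walk_len e n x y).
Proof.
apply: (iffP existsP) => [[p /andP[hp /eqP hl]]|[p [hs hp hl]]].
  by exists (val p); rewrite size_tuple.
have hs' : size p == n by rewrite hs.
by exists (Tuple hs'); rewrite /= hp hl eqxx.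
Qed.

Lemma connect_walk_len x y :
  connect e x y -> exists2 n, n < #|T| & walk_len e n x y.
Proof.
case/connectP=> p hp ->; case: (shortenP hp) => q hq huq _.
exists (size q); last by apply/walk_lenP; exists q.
by rewrite -[_ < _]/(size (x :: q) <= _) -(card_uniqP huq) max_card.
Qed.

Lemma gdist_walk_len x y :
  connect e x y -> gdist e x y < #|T| /\ walk_len e (gdist e x y) x y.
Proof.
case/connect_walk_len=> n hn hw.
have hh : has (fun n => walk_len e n x y) (iota 0 #|T|).
  by apply/hasP; exists n; rewrite ?mem_iota.
have lt_d : gdist e x y < #|T| by rewrite /gdist -{2}(size_iota 0 #|T|) -has_find.
split=> //; have := nth_find 0 hh; rewrite nth_iota // add0n.
Qed.

Lemma gdist_min x y m : m < #|T| -> walk_len e m x y -> gdist e x y <= m.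
Proof.
move=> hm hw; rewrite leqNgt; apply/negP => /(before_find 0).
by rewrite nth_iota ?add0n ?hw.
Qed.

Lemma gdist_refl r : gdist e r r = 0.
Proof.
have : 0 < #|T| by apply/card_gt0P; exists r.
rewrite /gdist; case: #|T| => [|n] //= _.
suff -> : walk_len e 0 r r by [].
by apply/walk_lenP; exists [::].
Qed.

Hypothesis conn : connected_graph e.

Lemma gdist_eq0 r y : gdist e r y = 0 -> y = r.
Proof.
have [_] := gdist_walk_len (conn r y).
by move=> + d0; rewrite d0 => /walk_lenP[[|a p] [hs hp hl]].
Qed.

Lemma gdist_edge r z y : e z y -> gdist e r y <= (gdist e r z).+1.
Proof.
move=> ezy; have [lt_y _] := gdist_walk_len (conn r y).
have [_ /walk_lenP[p [hs hp hl]]] := gdist_walk_len (conn r z).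
case: (ltnP (gdist e r z).+1 #|T|) => [lt_z|]; last exact/leq_trans/ltnW.
apply: gdist_min => //; apply/walk_lenP; exists (rcons p y).
by rewrite size_rcons hs rcons_path hp hl ezy last_rcons.
Qed.

Hypothesis sym : symmetric e.

Lemma gdist_closer_neighbour r y :
  y != r -> exists2 z, e y z & gdist e r z < gdist e r y.
Proof.
move=> yr; have [lt_y /walk_lenP[p [hs hp hl]]] := gdist_walk_len (conn r y).
case/lastP: p hs hp hl => [|q w] hs hp hl; first by rewrite -hl eqxx in yr.
move: hp hl; rewrite rcons_path last_rcons => /andP[hq hw] wy; subst w.
exists (last r q); first by rewrite sym.
have lt_q : size q < gdist e r y by rewrite -hs size_rcons.
apply: (leq_ltn_trans _ lt_q); apply: gdist_min; first exact: ltn_trans lt_q lt_y.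
by apply/walk_lenP; exists q.
Qed.

End Distance.

Lemma bandwidth_le (T : finType) (e : rel T) (s : seq T) (b : nat) :
  symmetric e -> (forall u v, e u v -> index v s - index u s <= b) ->
  bandwidth e s <= b.
Proof.
move=> sym span; apply/bigmax_leqP => u _; apply/bigmax_leqP => v euv.
by rewrite geq_max !span // sym.
Qed.

Section LayeredOrdering.

Variables (T : finType) (e : rel T) (s : seq T) (r : T).
Hypotheses (sym : symmetric e) (conn : connected_graph e).
Hypotheses (s_uniq : uniq s) (s_all : forall x, x \in s).
Hypothesis layered : forall x0 i j, i <= j < size s ->
  gdist e (nth x0 s 0) (nth x0 s i) <= gdist e (nth x0 s 0) (nth x0 s j).

Let root := head r s.
Local Notation D := (gdist e root).
Local Notation parent := (ftree_parent e s).

Lemma gdist_index_mono x y : index x s <= index y s -> D x <= D y.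
Proof.
move=> le_xy; have := @layered r (index x s) (index y s).
by rewrite le_xy index_mem s_all !nth_index // nth0; apply.
Qed.

Lemma ftree_parent_adj u : u != root -> e u (parent u).
Proof.
move=> ur; have [z euz _] := gdist_closer_neighbour conn sym ur.
by apply: nth_find; apply/hasP; exists z.
Qed.

Lemma gdist_ftree_parent u : u != root -> (D (parent u)).+1 = D u.
Proof.
move=> ur; have [z euz lt_z] := gdist_closer_neighbour conn sym ur.
have find_le : find (e u) s <= index z s.
  by rewrite leqNgt; apply/negP => /(before_find u); rewrite nth_index ?euz.
have index_parent : index (parent u) s = find (e u) s.
  by rewrite index_uniq // -has_find; apply/hasP; exists z.
have le_pz : D (parent u) <= D z by apply: gdist_index_mono; rewrite index_parent.
apply/eqP; rewrite eqn_leq (leq_ltn_trans le_pz lt_z).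
by rewrite gdist_edge // sym ftree_parent_adj.
Qed.

Lemma card_layer_le_leaves d :
  0 < d -> #|layer e root d| <= #|ftree_leaves e s root|.
Proof.
move=> d_gt0; pose anc l := iter (D l - d) parent l.
suff sub : layer e root d \subset anc @: ftree_leaves e s root.
  by apply: leq_trans (subset_leq_card sub) _; rewrite leq_imset_card.
apply/subsetP => w; rewrite inE => /eqP Dw.
pose Q x := (d <= D x) && (anc x == w).
have Qw : Q w by rewrite /Q Dw leqnn /anc Dw subnn eqxx.
(* a descendant of [w] of maximal depth is a leaf *)
case: (arg_maxnP D Qw) => x /andP[le_dx /eqP anc_x] max_x.
apply/imsetP; exists x => //; rewrite !inE.
have xr : x != root by apply: contraTneq le_dx => ->; rewrite gdist_refl -ltnNge.
rewrite xr; apply/forallP => u; apply/implyP => ur; apply/eqP => pux.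
have Du := gdist_ftree_parent ur; rewrite pux in Du.
have Qu : Q u.
  rewrite /Q -Du (leq_trans le_dx) // /anc -Du subSn //.
  by rewrite iterSr pux -/(anc x) anc_x eqxx.
by have /= := max_x u Qu; rewrite -Du ltnn.
Qed.

Lemma card_layer0 : #|layer e root 0| <= 1.
Proof.
rewrite -(cards1 root); apply/subset_leq_card/subsetP => y.
by rewrite !inE => /eqP/(gdist_eq0 conn)->.
Qed.

Lemma ftree_leaves_gt0 : 1 < #|T| -> 0 < #|ftree_leaves e s root|.
Proof.
case/card_gt1P => a [b [_ _ ab]].
have [x xr] : exists x, x != root.
  by case: (eqVneq a root) => [ar|]; [exists b; rewrite -ar eq_sym | exists a].
have Dx_gt0 : 0 < D x by rewrite lt0n; apply: contra_neq xr => /(gdist_eq0 conn).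
apply: leq_trans (card_layer_le_leaves Dx_gt0).
by apply/card_gt0P; exists x; rewrite inE.
Qed.

Lemma index_span_le_card u v : index u s <= index v s ->
  (index v s - index u s).+1 <= #|[set x | D u <= D x <= D v]|.
Proof.
move=> le_uv; have lt_v : index v s < size s by rewrite index_mem.
pose between := [seq nth r s i | i <- iota (index u s) (index v s - index u s).+1].
have in_range i : i \in iota (index u s) (index v s - index u s).+1 ->
    index u s <= i <= index v s.
  by rewrite mem_iota => /andP[]; lia.
have between_uniq : uniq between.
  rewrite map_inj_in_uniq ?iota_uniq // => i j.
  move=> /in_range/andP[_ hi] /in_range/andP[_ hj] /eqP.
  by rewrite nth_uniq ?(leq_ltn_trans hi lt_v) ?(leq_ltn_trans hj lt_v) // => /eqP.
rewrite -(size_iota (index u s) (index v s - index u s).+1) -(size_map (nth r s)).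
rewrite -(card_uniqP between_uniq); apply/subset_leq_card/subsetP => y.
case/mapP => i /in_range/andP[le_ui le_iv] ->; rewrite inE.
have index_i : index (nth r s i) s = i by rewrite index_uniq ?(leq_ltn_trans le_iv lt_v).
by rewrite !gdist_index_mono ?index_i.
Qed.

Lemma edge_index_span k u v : (forall d, #|layer e root d| <= k) ->
  e u v -> index v s - index u s <= 2 * k - 1.
Proof.
move=> layer_le euv; case: (leqP (index v s) (index u s)) => [|lt_uv].
  by rewrite -subn_eq0 => /eqP->.
have le_vu : D v <= (D u).+1 := gdist_edge conn root euv.
have sub : [set x | D u <= D x <= D v] \subset layer e root (D u) :|: layer e root (D v).
  by apply/subsetP => x; rewrite !inE => /andP[]; lia.
have := leq_trans (index_span_le_card (ltnW lt_uv)) (subset_leq_card sub).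
have := (leq_card_setU (layer e root (D u)) (layer e root (D v))).1.
have := layer_le (D u); have := layer_le (D v); lia.
Qed.

End LayeredOrdering.

Theorem corollary3p2 (T : finType) (e : rel T) (s : seq T) (k : nat) :
  simple_graph e -> connected_graph e -> 2 <= #|T| ->
  layered_search_ordering e s ->
  forall r : T,
  #|ftree_leaves e s (head r s)| <= k ->
  bandwidth e s <= 2 * k - 1.
Proof.
move=> [sym _] conn T_gt1 [[[s_uniq s_all] _] layered] r leaves_le.
have k_gt0 : 0 < k.
  exact: leq_trans (ftree_leaves_gt0 r sym conn s_uniq s_all layered T_gt1) _.
have layer_le d : #|layer e (head r s) d| <= k.
  case: d => [|d]; first exact: leq_trans (card_layer0 s r conn) k_gt0.
  exact: leq_trans (card_layer_le_leaves r sym conn s_uniq s_all layered _) _.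
apply: (bandwidth_le sym) => u v.
exact: (edge_index_span conn s_uniq s_all layered layer_le).
Qed.
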